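(* Let $d\ge 2$, let $\mathcal{V}\subset\mathbb{R}^d$ be a finite vertex set in general position, and let $\tau$ be the Delaunay mesh of $\mathcal{V}$. Let $Q=\{v_1,\ldots,v_m\}\subset\mathcal{V}$ with $m\ge d$ (in the application, $Q$ consists of interface vertices of a mesh interface $\Gamma_\tau$) such that the closed ball bounded by the minimum covering sphere of $Q$ contains no vertex of $\mathcal{V}$ other than $v_1,\ldots,v_m$. Then for any two vertices $p_1,p_2\in\mathcal{V}\setminus Q$: if the segment $\overline{p_1p_2}$ intersects $\operatorname{conv}(Q)$, then $\overline{p_1p_2}$ is not an edge of the Delaunay mesh $\tau$.
   Context: A mesh of $\Omega=\operatorname{conv}(\mathcal{V})$ is a partition of $\Omega$ into nondegenerate $d$-simplices with vertices in $\mathcal{V}$; an edge of a simplex is the segment between two of its vertices. The Delaunay mesh $\tau(\mathcal{V})$ is the (unique, under general position) mesh such that the circumsphere of each cell contains no vertex of $\mathcal{V}$ in its interior other than the cell's own vertices. The minimum covering sphere of a non-empty finite set $Q$ is the smallest sphere such that every point of $Q$ lies inside it or on it. A finite point set in $\mathbb{R}^d$ is in general position if for each $i=1,\ldots,d$ no $i+1$ of its points lie in an affine subspace of dimension $i-1$, and no $d+2$ of its points lie on a common sphere. A mesh interface $\Gamma_\tau$ is a $(d-1)$-dimensional mesh formed by $(d-1)$-dimensional facets of cells of $\tau$ forming a surface in $\mathbb{R}^d$; its vertices are called interface vertices. *)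

From HB Require Import structures.
From mathcomp Require Import all_boot all_order all_algebra.
From mathcomp Require Import reals.
Set Implicit Arguments. Unset Strict Implicit. Unset Printing Implicit Defensive.
Import Order.TTheory GRing.Theory Num.Theory.
Local Open Scope ring_scope.

Section Defs.
Variables (R : realType) (d : nat).
Notation pt := 'rV[R]_d.

Definition sqdist (x y : pt) : R := \sum_(i < d) (x ord0 i - y ord0 i) ^+ 2.

Definition in_conv (s : seq pt) (x : pt) : Prop :=
  exists w : 'I_(size s) -> R,
    (forall i, 0 <= w i) /\ \sum_i w i = 1 /\ x = \sum_i w i *: s`_i.

Definition in_open_simplex (s : seq pt) (x : pt) : Prop :=
  exists w : 'I_(size s) -> R,
    (forall i, 0 < w i) /\ \sum_i w i = 1 /\ x = \sum_i w i *: s`_i.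

Definition in_segment (p1 p2 x : pt) : Prop :=
  exists t : R, 0 <= t <= 1 /\ x = (1 - t) *: p1 + t *: p2.

Definition aff_indep (s : seq pt) : Prop :=
  forall w : 'I_(size s) -> R,
    \sum_i w i = 0 -> \sum_i w i *: s`_i = 0 -> forall i, w i = 0.

Definition in_affine_subspace (k : nat) (s : seq pt) : Prop :=
  exists (a : pt) (u : 'I_k -> pt),
    forall p, p \in s -> exists c : 'I_k -> R, p = a + \sum_j c j *: u j.

Definition cospherical (s : seq pt) : Prop :=
  exists (c : pt) (rho : R), 0 < rho /\ forall p, p \in s -> sqdist p c = rho.

Definition general_position (V : seq pt) : Prop :=
  (forall i : nat, (1 <= i <= d)%N ->
     forall s : seq pt, uniq s -> {subset s <= V} -> size s = i.+1 ->
       ~ in_affine_subspace i.-1 s) /\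
  (forall s : seq pt, uniq s -> {subset s <= V} -> size s = d.+2 ->
       ~ cospherical s).

Definition is_mesh (V : seq pt) (tau : seq (seq pt)) : Prop :=
  (forall C, C \in tau ->
     [/\ size C = d.+1, uniq C, {subset C <= V} & aff_indep C]) /\
  (forall x, in_conv V x <-> exists2 C, C \in tau & in_conv C x) /\
  (forall i j : nat, (i < j < size tau)%N ->
     forall x, ~ (in_open_simplex (nth [::] tau i) x /\
                  in_open_simplex (nth [::] tau j) x)).

Definition is_delaunay_mesh (V : seq pt) (tau : seq (seq pt)) : Prop :=
  is_mesh V tau /\
  forall C, C \in tau ->
    forall (c : pt) (rho : R), (forall p, p \in C -> sqdist p c = rho) ->
      forall v, v \in V -> v \notin C -> ~ (sqdist v c < rho).

Definition min_covering_sphere (Q : seq pt) (c : pt) (rho : R) : Prop :=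
  (forall q, q \in Q -> sqdist q c <= rho) /\
  (forall (c' : pt) (rho' : R),
     (forall q, q \in Q -> sqdist q c' <= rho') -> rho <= rho').

Definition is_mesh_edge (tau : seq (seq pt)) (p1 p2 : pt) : Prop :=
  p1 != p2 /\ exists2 C, C \in tau & (p1 \in C) && (p2 \in C).

End Defs.

From HB Require Import structures.
From mathcomp Require Import all_boot all_order all_algebra.
From mathcomp Require Import reals ring lra.
Set Implicit Arguments. Unset Strict Implicit. Unset Printing Implicit Defensive.
Import Order.TTheory GRing.Theory Num.Theory.
Local Open Scope ring_scope.

(* Suppose p1 p2 is an edge of a Delaunay cell C, with circumcentre c' and
   squared circumradius r, and let (c, rho) be the covering sphere of Q.  The
   difference of squared distances K y = |y - c'|^2 - |y - c|^2 is affine in y.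
   Every q in Q lies outside the open circumball of C and inside the covering
   ball, so K q >= r - rho; the p_i lie on the circumsphere and outside the
   closed covering ball, so K p_i < r - rho.  Hence a point of the segment
   cannot be a convex combination of Q. *)

Lemma convex_comb_ge (R : realDomainType) n (w f : 'I_n -> R) (m : R) :
  (forall i, 0 <= w i) -> \sum_i w i = 1 -> (forall i, m <= f i) ->
  m <= \sum_i w i * f i.
Proof.
move=> w_ge0 w_sum1 mf; rewrite -[m]mul1r -w_sum1 mulr_suml.
by apply: ler_sum => i _; rewrite ler_wpM2l.
Qed.

Lemma segment_comb_lt (R : realDomainType) (t a b m : R) :
  0 <= t <= 1 -> a < m -> b < m -> (1 - t) * a + t * b < m.
Proof.
move=> /andP[t0 t1] am bm; apply: (le_lt_trans (y := Num.max a b)).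
  apply: (le_trans (y := (1 - t) * Num.max a b + t * Num.max a b)).
    by rewrite lerD // ler_wpM2l ?le_max ?lexx ?orbT // subr_ge0.
  by rewrite -mulrDl subrK mul1r.
by rewrite gt_max am.
Qed.

Section PowerDifference.
Variables (R : realType) (d : nat).
Notation pt := 'rV[R]_d.

Definition sqdist_gap (a b y : pt) : R := sqdist y a - sqdist y b.

Lemma sqdist_gapE (a b y : pt) :
  sqdist_gap a b y = (y *m (2 *: (b - a)^T)) 0 0 + (sqdist a 0 - sqdist b 0).
Proof.
rewrite /sqdist_gap /sqdist !mxE -!sumrB -big_split /=.
by apply: eq_bigr => i _; rewrite !mxE; ring.
Qed.

Lemma sqdist_gap_conv (a b : pt) n (w : 'I_n -> R) (q : 'I_n -> pt) :
  \sum_i w i = 1 ->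
  sqdist_gap a b (\sum_i w i *: q i) = \sum_i w i * sqdist_gap a b (q i).
Proof.
move=> w_sum1; under [RHS]eq_bigr => i _ do rewrite sqdist_gapE mulrDr.
rewrite sqdist_gapE big_split /= -mulr_suml w_sum1 mul1r mulmx_suml summxE.
by congr (_ + _); apply: eq_bigr => i _; rewrite -scalemxAl mxE.
Qed.

Lemma sqdist_gap_segment (a b p1 p2 : pt) (t : R) :
  sqdist_gap a b ((1 - t) *: p1 + t *: p2) =
  (1 - t) * sqdist_gap a b p1 + t * sqdist_gap a b p2.
Proof.
rewrite !sqdist_gapE mulmxDl -!scalemxAl !mxE; ring.
Qed.

End PowerDifference.

Section Circumsphere.
Variables (R : realType) (d : nat).
Notation pt := 'rV[R]_d.

Definition edge_matrix (a : pt) (t : seq pt) : 'M[R]_(size t, d) :=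
  \matrix_(i < size t) (t`_i - a).

Lemma aff_indep_edge_free (a : pt) (t : seq pt) :
  aff_indep (a :: t) -> row_free (edge_matrix a t).
Proof.
move=> indep; apply: inj_row_free => v vM0; apply/rowP => j.
pose W (k : 'I_(size t).+1) :=
  if unlift ord0 k is Some i then v 0 i else - \sum_i v 0 i.
have W_lift i : W (lift ord0 i) = v 0 i by rewrite /W liftK.
have W_ord0 : W ord0 = - \sum_i v 0 i by rewrite /W unlift_none.
have W_sum0 : \sum_k W k = 0.
  rewrite big_ord_recl; under eq_bigr => i _ do rewrite W_lift.
  by rewrite W_ord0 addNr.
have W_comb0 : \sum_k W k *: (a :: t)`_k = 0.
  rewrite big_ord_recl; under eq_bigr => i _ do rewrite W_lift.
  rewrite W_ord0 -[RHS]vM0 mulmx_sum_row /= scaleNr scaler_suml addrC -sumrB.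
  by apply: eq_bigr => i _; rewrite rowK scalerBr.
by rewrite -W_lift (indep W W_sum0 W_comb0 (lift ord0 j)) mxE.
Qed.

Lemma aff_indep_circumsphere (s : seq pt) :
  aff_indep s -> exists (c : pt) (r : R), forall p, p \in s -> sqdist p c = r.
Proof.
case: s => [_|a t indep]; first by exists 0, 0.
pose M := edge_matrix a t.
pose b : 'cV[R]_(size t) := \col_i ((sqdist t`_i 0 - sqdist a 0) / 2).
have Mc : M *m (pinvmx M *m b) = b.
  by rewrite mulmxA mulmxVp ?mul1mx //; apply: aff_indep_edge_free.
exists (pinvmx M *m b)^T, (sqdist a (pinvmx M *m b)^T) => p.
rewrite inE => /predU1P[-> //|/(nthP 0)[i it <-]].
have := congr1 (fun B : 'cV_(size t) => B (Ordinal it) 0) Mc.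
rewrite !mxE => Mci; apply/eqP; rewrite -subr_eq0; apply/eqP.
transitivity (sqdist t`_i 0 - sqdist a 0 - 2 * \sum_l M (Ordinal it) l * (pinvmx M *m b) l 0).
  rewrite /sqdist mulr_sumr -!sumrB; apply: eq_bigr => l _; rewrite !mxE /=; ring.
by rewrite Mci; field.
Qed.

End Circumsphere.

Lemma delaunay_circumball_empty (R : realType) (d : nat) (V : seq 'rV[R]_d)
    (tau : seq (seq 'rV[R]_d)) (C : seq 'rV[R]_d) (c : 'rV[R]_d) (r : R) (v : 'rV[R]_d) :
  is_delaunay_mesh V tau -> C \in tau ->
  (forall p, p \in C -> sqdist p c = r) -> v \in V -> r <= sqdist v c.
Proof.
move=> [_ empty] Ctau C_sphere vV; have [vC|vNC] := boolP (v \in C).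
  by rewrite C_sphere.
by rewrite leNgt; apply/negP; apply: empty Ctau c r C_sphere v vV vNC.
Qed.

Theorem mainTheorem2 (R : realType) (d : nat) (V : seq 'rV[R]_d)
    (tau : seq (seq 'rV[R]_d)) (Q : seq 'rV[R]_d) :
  (2 <= d)%N ->
  uniq V ->
  general_position V ->
  is_delaunay_mesh V tau ->
  uniq Q -> {subset Q <= V} -> (d <= size Q)%N ->
  (exists (c : 'rV[R]_d) (rho : R),
     min_covering_sphere Q c rho /\
     forall v, v \in V -> v \notin Q -> ~ (sqdist v c <= rho)) ->
  forall p1 p2 : 'rV[R]_d,
    p1 \in V -> p1 \notin Q -> p2 \in V -> p2 \notin Q ->
    (exists x, in_segment p1 p2 x /\ in_conv Q x) ->
    ~ is_mesh_edge tau p1 p2.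
Proof.
move=> _ _ _ delV _ QV _ [c [rho [[Q_covered _] ball_empty]]] p1 p2 p1V p1Q p2V p2Q
  [x [[t [t01 ->]] [w [w_ge0 [w_sum1 xw]]]]] [_ [C Ctau /andP[p1C p2C]]].
have [_ _ _ C_indep] := delV.1.1 C Ctau.
have [c' [r C_sphere]] := aff_indep_circumsphere C_indep.
pose K := sqdist_gap c' c.
have K_Q (i : 'I_(size Q)) : r - rho <= K Q`_i.
  have qQ : Q`_i \in Q by rewrite mem_nth.
  have := delaunay_circumball_empty delV Ctau C_sphere (QV _ qQ).
  have := Q_covered _ qQ; rewrite /K /sqdist_gap; lra.
have K_C p : p \in V -> p \notin Q -> p \in C -> K p < r - rho.
  move=> pV pQ pC; have := ball_empty p pV pQ; rewrite /K /sqdist_gap C_sphere //.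
  move/negP; rewrite -ltNge; lra.
have := convex_comb_ge w_ge0 w_sum1 K_Q.
rewrite -sqdist_gap_conv // -xw sqdist_gap_segment leNgt.
by rewrite segment_comb_lt ?K_C.
Qed.
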